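(* In the setting below, assume $\mathbb{P}(X=x)=0$ and $\mathbb{E}[\mathbb{I}_{\bar B_r}(X)|\eta(X)-\eta(x)|]>0$ for all $r>0$. Let $(r_m)_{m\ge m_1}$ be the $\alpha$-sequence at $x$ for some $\alpha\in(0,1)$, and suppose $x$ is a Lebesgue point for $\eta$ with respect to $\mathbb{P}_X$. Then the following are equivalent: (i) $\mathbb{E}[|\eta(X^x_m)-\eta(x)|]\to 0$ as $m\to\infty$; (ii) $\mathbb{E}[\mathbb{I}_{S_{r_m}}(X^x_m)|\eta(X^x_m)-\eta(x)|]\to 0$ as $m\to\infty$.
   Context: Let $(\mathcal{X},d)$ be a metric space with its Borel $\sigma$-algebra, let $(\Omega,\mathcal{F},\mathbb{P})$ be a probability space, and let $X,X_1,X_2,\dots$ be i.i.d. $\mathcal{X}$-valued random variables with common law $\mathbb{P}_X$. For $x\in\mathcal{X}$ and $r>0$ write $B_r=\{x':d(x,x')<r\}$, $\bar B_r=\{x':d(x,x')\le r\}$ and $S_r=\{x':d(x,x')=r\}$. The support of $\mathbb{P}_X$ is the set of $x$ such that $\mathbb{P}_X(\bar B_r(x))>0$ for all $r>0$. Fix $x$ in the support of $\mathbb{P}_X$ and a bounded measurable $\eta:\mathcal{X}\to\mathbb{R}$. For each $m\in\mathbb{N}$, a nearest neighbor of $x$ among $X_1,\dots,X_m$ is a measurable $X^x_m:\Omega\to\mathcal{X}$ with $X^x_m(\omega)\in\arg\min_{x'\in\{X_1(\omega),\dots,X_m(\omega)\}}d(x,x')$ for every $\omega\in\Omega$; fix such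 a sequence $(X^x_m)_{m\in\mathbb{N}}$. The point $x$ is a Lebesgue point if $\mathbb{E}[\mathbb{I}_{\bar B_r}(X)\,|\eta(X)-\eta(x)|]/\mathbb{P}_X(\bar B_r)\to 0$ as $r\to 0^+$. For $\alpha\in(0,1)$ and $r>0$ define $M_\alpha(r)=\big(\mathbb{E}[\mathbb{I}_{\bar B_r}(X)|\eta(X)-\eta(x)|]\big)^{\alpha}\big(\mathbb{P}_X(\bar B_r)\big)^{1-\alpha}$; let $m_1=\lceil 1/M_\alpha(1)\rceil$ and for integers $m\ge m_1$ let $r_m=\sup\{r>0:M_\alpha(r)<1/m\}$. The sequence $(r_m)_{m\ge m_1}$ is the $\alpha$-sequence at $x$. *)

From HB Require Import structures.
From mathcomp Require Import all_boot all_order all_algebra.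
From mathcomp Require Import all_classical all_reals all_analysis.
Set Implicit Arguments. Unset Strict Implicit. Unset Printing Implicit Defensive.
Import Order.TTheory GRing.Theory Num.Theory.
Import numFieldNormedType.Exports.
Local Open Scope classical_set_scope.
Local Open Scope ring_scope.

Section Defs.
Context {R : realType} {d : measure_display} {T : measurableType d}.
Context {dO : measure_display} {Omega : measurableType dO}.

Definition is_metric (dist : T -> T -> R) : Prop :=
  [/\ forall x y, dist x y = 0 <-> x = y,
      forall x y, dist x y = dist y x &
      forall x y z, dist x z <= dist x y + dist y z].

Definition metric_open (dist : T -> T -> R) (A : set T) : Prop :=
  forall y, A y -> exists2 e : R, 0 < e & [set z | dist y z < e] `<=` A.

Definition cball (dist : T -> T -> R) (x : T) (r : R) : set T :=
  [set y | dist x y <= r].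
Definition sphere (dist : T -> T -> R) (x : T) (r : R) : set T :=
  [set y | dist x y = r].

(* X_0 = X, X_1, X_2, ... i.i.d.: identically distributed and mutually
   independent (product rule over every finite initial segment, which with
   B i = setT covers every finite subfamily). *)
Definition iid_seq (P : probability Omega R) (Xs : nat -> Omega -> T) : Prop :=
  (forall i, measurable_fun setT (Xs i)) /\
  (forall i (A : set T), measurable A -> P (Xs i @^-1` A) = P (Xs 0 @^-1` A)) /\
  (forall (n : nat) (B : nat -> set T), (forall i, measurable (B i)) ->
     P (\bigcap_(i in `I_n) (Xs i @^-1` B i)) = (\prod_(i < n) P (Xs i @^-1` B i))%E).

Definition nearest_neighbors (dist : T -> T -> R) (x : T)
    (Xs : nat -> Omega -> T) (XN : nat -> Omega -> T) : Prop :=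
  (forall m, measurable_fun setT (XN m)) /\
  (forall m w, (1 <= m)%N ->
     (exists2 i, (1 <= i <= m)%N & XN m w = Xs i w) /\
     (forall j, (1 <= j <= m)%N -> dist x (XN m w) <= dist x (Xs j w))).

Definition locE (P : probability Omega R) (dist : T -> T -> R) (X : Omega -> T)
    (eta : T -> R) (x : T) (r : R) : \bar R :=
  (\int[P]_w ((\1_(cball dist x r) (X w)) * `|eta (X w) - eta x|)%:E)%E.

Definition PXball (P : probability Omega R) (dist : T -> T -> R) (X : Omega -> T)
    (x : T) (r : R) : \bar R := P (X @^-1` cball dist x r).

Definition lebesgue_point (P : probability Omega R) (dist : T -> T -> R)
    (X : Omega -> T) (eta : T -> R) (x : T) : Prop :=
  (fun r => fine (locE P dist X eta x r) / fine (PXball P dist X x r)) @ 0^'+ --> 0.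

Definition Malpha (P : probability Omega R) (dist : T -> T -> R) (X : Omega -> T)
    (eta : T -> R) (x : T) (alpha r : R) : R :=
  (fine (locE P dist X eta x r)) `^ alpha * (fine (PXball P dist X x r)) `^ (1 - alpha).

Definition alpha_m1 (P : probability Omega R) (dist : T -> T -> R) (X : Omega -> T)
    (eta : T -> R) (x : T) (alpha : R) : nat :=
  `|Num.ceil (Malpha P dist X eta x alpha 1)^-1|%N.

(* r_m = sup {r > 0 | M_alpha(r) < 1/m}  (meaningful for m >= m_1) *)
Definition alpha_seq (P : probability Omega R) (dist : T -> T -> R) (X : Omega -> T)
    (eta : T -> R) (x : T) (alpha : R) (m : nat) : R :=
  sup [set r : R | 0 < r /\ Malpha P dist X eta x alpha r < m%:R^-1].

End Defs.

From HB Require Import structures.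
From mathcomp Require Import all_boot all_order all_algebra.
From mathcomp Require Import all_classical all_reals all_analysis measurable_realfun.
From mathcomp Require Import lra.
Import Order.TTheory GRing.Theory Num.Theory.
Import numFieldNormedType.Exports.
Local Open Scope classical_set_scope.
Local Open Scope ring_scope.

(* Since the sphere term is bounded by the risk,
   (i) implies (ii).  For the converse, the nearest neighbour either lies in
   the open ball B_{r_m} (then it is one of X_1..X_m lying there), or on the
   sphere S_{r_m}, or outside the closed ball; hence
     risk <= m locdev(r_m^-) + sphere term + K P(d(x, XN) > r_m).
   At a Lebesgue point locdev t <= de pball t for small t.  Below r_m we have
   M < 1/m, which gives m locdev <= de^(1-alpha); beyond r_m we have
   M >= 1/m, which gives m pball(t) de^alpha >= 1 and, by independence,
   P(d(x, XN) > t) <= (1 - pball t)^m <= de^alpha.  Choosing de small makes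
   risk <= eps + sphere term eventually. *)

Lemma exists_small_scale {R : realType} {a K eps : R} :
  0 < a < 1 -> 0 <= K -> 0 < eps ->
  exists2 de : R, 0 < de & de `^ (1 - a) + K * de `^ a <= eps.
Proof.
move=> /andP[a0 a1] K0 e0.
set q := eps / (1 + K).
have q0 : 0 < q by rewrite divr_gt0 //; lra.
have powRV (b : R) : 0 < b -> (q `^ b^-1) `^ b = q.
  by move=> b0; rewrite -powRrM mulVf ?gt_eqF // powRr1 // ltW.
have ler_q (b de : R) : 0 < b -> 0 < de -> de <= q `^ b^-1 -> de `^ b <= q.
  move=> b0 de0 le_de; rewrite -[leRHS](powRV _ b0).
  by apply: ge0_ler_powR; rewrite ?nnegrE ?(ltW b0) ?(ltW de0) ?powR_ge0.
set de := Order.min (q `^ (1 - a)^-1) (q `^ a^-1).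
have de0 : 0 < de by rewrite lt_min !powR_gt0.
exists de => //.
have near_q : de `^ (1 - a) <= q by apply: ler_q; rewrite ?ge_min ?lexx //; lra.
have far_q : de `^ a <= q by apply: ler_q; rewrite ?ge_min ?lexx ?orbT.
have far_Kq : K * de `^ a <= K * q by exact: ler_wpM2l.
have : q * (1 + K) = eps by rewrite /q -mulrA mulVf ?mulr1 // gt_eqF //; lra.
nra.
Qed.

(* (1 - q)^n * (n q) <= 1: the probability that n independent trials of
   success probability q all fail is at most 1 / (n q). *)
Lemma expr_fail_le {R : realType} {q : R} (n : nat) :
  0 <= q <= 1 -> (1 - q) ^+ n * (n%:R * q) <= 1.
Proof.
move=> /andP[q0 q1].
have pow0 k : 0 <= (1 - q) ^+ k by apply: exprn_ge0; lra.
suff bernoulli : (1 - q) ^+ n * (1 + n%:R * q) <= 1.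
  by move: bernoulli (pow0 n); set a := (1 - q) ^+ n; set N := n%:R; nra.
elim: n => [|n IH]; first by rewrite expr0 mul0r addr0 mul1r.
have step : (1 - q) * (1 + n.+1%:R * q) <= 1 + n%:R * q.
  have n0 : 0 <= n%:R :> R by [].
  by rewrite -natr1; set N := n%:R; nra.
rewrite exprS -mulrA.
move: IH step (pow0 n); set a := (1 - q) ^+ n; set N := n%:R; rewrite -natr1 -/N.
nra.
Qed.

Lemma powR_split {R : realType} (a : R) {y : R} : 0 < y -> y = y `^ a * y `^ (1 - a).
Proof.
move=> y0; rewrite -powRD; last by rewrite (gt_eqF y0) implybT.
by rewrite addrC subrK powRr1 // ltW.
Qed.

Lemma indic01 (R : realType) {U : Type} (A : set U) (y : U) :
  0 <= (\1_A y : R) <= 1.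
Proof. by rewrite indicE; case: (y \in A); rewrite /= ?lexx ?ler01. Qed.

Lemma preimage_measurable {d1 d2 : measure_display} {T1 : measurableType d1}
  {T2 : measurableType d2} {f : T1 -> T2} {A : set T2} :
  measurable_fun setT f -> measurable A -> measurable (f @^-1` A).
Proof. by move=> mf mA; rewrite -[_ @^-1` _]setTI; exact: mf. Qed.

Lemma nonneg_cvge0P {R : realType} (u : nat -> \bar R) :
  (forall n, (0 <= u n)%E) ->
  u @ \oo --> 0%E <-> (forall e : R, 0 < e -> \forall n \near \oo, (u n <= e%:E)%E).
Proof.
move=> u0; split => [/fine_cvgP[fin_u /cvgr0Pnorm_le small] e e0 | small].
  apply: filterS2 fin_u (small e e0) => n fin_un.
  by rewrite ger0_norm ?fine_ge0 // -lee_fin fineK.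
have fin_u : \forall n \near \oo, u n \is a fin_num.
  apply: filterS (small 1 ltr01) => n un1.
  by rewrite ge0_fin_numE ?(le_lt_trans un1) ?ltry.
apply/fine_cvgP; split => //; apply/cvgr0Pnorm_le => e e0.
apply: filterS2 fin_u (small e e0) => n fin_un une.
by rewrite ger0_norm ?fine_ge0 // -lee_fin fineK.
Qed.

Section ProbabilityIntegrals.
Context {R : realType} {d : measure_display} {T : measurableType d}
  {dO : measure_display} {Omega : measurableType dO} (P : probability Omega R).

Lemma bounded_integral_fineK (f : Omega -> R) (K : R) :
  measurable_fun setT f -> (forall w, 0 <= f w <= K) ->
  (\int[P]_w (f w)%:E)%E = (fine (\int[P]_w (f w)%:E))%:E.
Proof.
move=> mf f0K.
have le_K : (\int[P]_w (f w)%:E <= K%:E)%E.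
  apply: le_trans (_ : \int[P]_w (cst K%:E w) <= _)%E.
    apply: ge0_le_integral => //.
    - by move=> w _; rewrite lee_fin; case/andP: (f0K w).
    - exact/measurable_EFinP.
    - by move=> w _; rewrite lee_fin; case/andP: (f0K w).
  rewrite integral_cst //.
  by rewrite [X in (_ * X)%E](probability_setT P) mule1.
have ge_0 : (0 <= \int[P]_w (f w)%:E)%E.
  by apply: integral_ge0 => w _; rewrite lee_fin; case/andP: (f0K w).
by rewrite fineK // ge0_fin_numE // (le_lt_trans le_K) ?ltry.
Qed.

Lemma integral_same_law {Y Z : Omega -> T} (h : T -> R) :
  measurable_fun setT Y -> measurable_fun setT Z ->
  (forall A, measurable A -> P (Y @^-1` A) = P (Z @^-1` A)) ->
  measurable_fun setT h -> (forall y, 0 <= h y) ->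
  (\int[P]_w (h (Y w))%:E)%E = (\int[P]_w (h (Z w))%:E)%E.
Proof.
move=> mY mZ YZ mh h0.
have pushE (V : Omega -> T) : measurable_fun setT V ->
    (\int[P]_w (h (V w))%:E)%E = (\int[pushforward P V]_y (h y)%:E)%E.
  move=> mV; rewrite ge0_integral_pushforward //; first exact/measurable_EFinP.
  by move=> y _; rewrite lee_fin.
rewrite (pushE _ mY) (pushE _ mZ).
by apply: eq_measure_integral => A mA _; exact: YZ.
Qed.

End ProbabilityIntegrals.

Definition oball {R : realType} {d : measure_display} {T : measurableType d}
  (dist : T -> T -> R) (x : T) (r : R) : set T := [set y | dist x y < r].

Section MetricBalls.
Context {R : realType} {d : measure_display} {T : measurableType d}
  {dist : T -> T -> R}.
Hypotheses (dist_metric : is_metric dist)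
  (borel : @measurable _ T = <<s metric_open dist >>).

Lemma dist_ge0 (y z : T) : 0 <= dist y z.
Proof.
case: dist_metric => dist0 distC triangle.
have := triangle y z y; rewrite (distC z y) (proj2 (dist0 y y) erefl).
lra.
Qed.

Lemma dist_le0 {y z : T} : dist y z <= 0 -> y = z.
Proof.
move=> le0; case: dist_metric => /(_ y z) [+ _] _ _; apply.
by apply/eqP; rewrite eq_le le0 dist_ge0.
Qed.

Lemma measurable_dist_gt (x : T) (r : R) : measurable [set y | r < dist x y].
Proof.
rewrite borel; apply: sub_gen_smallest => y /= ry.
exists (dist x y - r); first by rewrite subr_gt0.
move=> z /= yz; case: dist_metric => _ distC triangle.
by have := triangle x z y; rewrite (distC z y); lra.
Qed.

Lemma measurable_oball (x : T) (r : R) : measurable (oball dist x r).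
Proof.
rewrite borel /oball; apply: sub_gen_smallest => y /= ry.
exists (r - dist x y); first by rewrite subr_gt0.
move=> z /= yz; case: dist_metric => _ _ triangle.
by have := triangle x y z; lra.
Qed.

Lemma measurable_cball (x : T) (r : R) : measurable (cball dist x r).
Proof.
have -> : cball dist x r = ~` [set y | r < dist x y].
  by apply/seteqP; split => y /=; rewrite /cball /= leNgt => /negP.
exact/measurableC/measurable_dist_gt.
Qed.

Lemma measurable_sphere (x : T) (r : R) : measurable (sphere dist x r).
Proof.
have -> : sphere dist x r = cball dist x r `&` ~` oball dist x r.
  apply/seteqP; split => y; rewrite /sphere /cball /oball /=.
    by move=> ->; rewrite ltxx.
  by move=> [le_r /negP]; rewrite -leNgt => ge_r; apply/eqP; rewrite eq_le le_r.
exact/measurableI/measurableC/measurable_oball/measurable_cball.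
Qed.

Lemma indic_cball_le (x y : T) (r s : R) : r <= s ->
  (\1_(cball dist x r) y : R) <= \1_(cball dist x s) y.
Proof.
move=> rs; rewrite !indicE; case: (boolP (y \in cball dist x r)) => //= yr.
have ys : cball dist x s y by exact: le_trans (set_mem yr) rs.
by rewrite (mem_set ys).
Qed.

Lemma indic_cball_near_oball (x y : T) (r : R) :
  \forall k \near \oo, (\1_(cball dist x (r - k.+1%:R^-1)) y : R) = \1_(oball dist x r) y.
Proof.
have [lt_r|ge_r] := ltP (dist x y) r; last first.
  apply: nearW => k.
  have notc : ~ cball dist x (r - k.+1%:R^-1) y.
    rewrite /cball /=; have : 0 < k.+1%:R^-1 :> R by rewrite invr_gt0 ltr0n.
    by move: ge_r; set i := k.+1%:R^-1; lra.
  have noto : ~ oball dist x r y by rewrite /oball /=; apply/negP; rewrite -leNgt.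
  by rewrite !indicE (memNset notc) (memNset noto).
have gap : 0 < r - dist x y by rewrite subr_gt0.
near=> k.
have k_small : k.+1%:R^-1 < r - dist x y.
  by near: k; exact: (near_infty_natSinv_lt (PosNum gap)).
have inc : cball dist x (r - k.+1%:R^-1) y.
  by rewrite /cball /=; move: k_small; set i := k.+1%:R^-1; lra.
have ino : oball dist x r y by [].
by rewrite !indicE (mem_set inc) (mem_set ino).
Unshelve. all: by end_near.
Qed.

Context {dO : measure_display} {Omega : measurableType dO}
  (P : probability Omega R) {Y : Omega -> T} (x : T).
Hypothesis mY : measurable_fun setT Y.

(* Monotone convergence along the closed balls of radius r - 1/(k+1)
   exhausting the open ball of radius r. *)
Lemma integral_oball_le (h : T -> R) (r c : R) :
  measurable_fun setT h -> (forall y, 0 <= h y) ->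
  (forall s, s < r ->
     (\int[P]_w (\1_(cball dist x s) (Y w) * h (Y w))%:E <= c%:E)%E) ->
  (\int[P]_w (\1_(oball dist x r) (Y w) * h (Y w))%:E <= c%:E)%E.
Proof.
move=> mh h0 le_c.
have inv_gt0 (k : nat) : 0 < k.+1%:R^-1 :> R by rewrite invr_gt0 ltr0n.
pose f k w := (\1_(cball dist x (r - k.+1%:R^-1)) (Y w) * h (Y w))%:E.
have mf k : measurable_fun setT (f k).
  apply/measurable_EFinP/measurable_funM; last exact: measurableT_comp.
  exact/measurableT_comp/mY/measurable_indic/measurable_cball.
have f0 k w : setT w -> (0 <= f k w)%E.
  by move=> _; rewrite lee_fin mulr_ge0 //; case/andP: (indic01 R (cball dist x (r - k.+1%:R^-1)) (Y w)).
have f_nd w : setT w -> {homo f^~ w : n m / (n <= m)%N >-> (n <= m)%E}.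
  move=> _ n m nm; rewrite lee_fin ler_wpM2r // indic_cball_le //.
  by rewrite lerD2l lerN2 lef_pV2 ?posrE ?ltr0n // ler_nat ltnS.
have f_lim w : limn (f^~ w) = (\1_(oball dist x r) (Y w) * h (Y w))%:E.
  apply: lim_near_cst => //.
  by apply: filterS (indic_cball_near_oball x (Y w) r) => k; rewrite /f => ->.
have <- : (\int[P]_w limn (f^~ w))%E =
    (\int[P]_w (\1_(oball dist x r) (Y w) * h (Y w))%:E)%E.
  by apply: eq_integral => w _; rewrite f_lim.
rewrite monotone_convergence //.
apply: lime_le; first by apply/cvg_ex; eexists; exact: cvg_monotone_convergence.
apply: nearW => k; apply: le_c.
by have := inv_gt0 k; set i := k.+1%:R^-1; lra.
Qed.

(* Continuity from below of P: the tail event {r < d(x, Y)} is the increasing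
   union of the events {t < d(x, Y)} for t decreasing to r. *)
Lemma prob_far_le {r s : R} {c : \bar R} : r < s ->
  (forall t, r < t < s -> (P [set w | (t < dist x (Y w))%R] <= c)%E) ->
  (P [set w | (r < dist x (Y w))%R] <= c)%E.
Proof.
move=> rs le_c; set h := (s - r) / 2.
have h0 : 0 < h by rewrite divr_gt0 // subr_gt0.
have inv_gt0 (k : nat) : 0 < k.+1%:R^-1 :> R by rewrite invr_gt0 ltr0n.
have inv_le1 (k : nat) : k.+1%:R^-1 <= 1 :> R by rewrite invf_le1 ?ltr0n // ler1n.
pose F k := [set w | r + h * k.+1%:R^-1 < dist x (Y w)].
have mfar t : measurable [set w | t < dist x (Y w)].
  exact: preimage_measurable mY (measurable_dist_gt x t).
have UF : \bigcup_k F k = [set w | r < dist x (Y w)].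
  apply/seteqP; split => w /=.
    move=> [k _]; rewrite /F /= => hk; have := mulr_gt0 h0 (inv_gt0 k).
    by move: hk; set e := h * _; lra.
  move=> rw; have gap : 0 < (dist x (Y w) - r) / h by rewrite divr_gt0 // subr_gt0.
  have [N _ /(_ N (leqnn N)) /=] := near_infty_natSinv_lt (PosNum gap).
  rewrite ltr_pdivlMr // => ltN; exists N => //=; rewrite /F /= mulrC.
  by move: ltN; set i := N.+1%:R^-1; lra.
have F_nd : {homo F : n k / (n <= k)%N >-> (n <= k)%O}.
  move=> n k nk; rewrite subsetEset => w /=; apply: le_lt_trans.
  by rewrite lerD2l ler_pM2l // lef_pV2 ?posrE ?ltr0n // ler_nat ltnS.
have mF k : measurable (F k) by exact: mfar.
have cvF := @nondecreasing_cvg_mu _ _ _ P F mF (bigcupT_measurable F mF) F_nd.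
have -> : P [set w | (r < dist x (Y w))%R] = lim ((P \o F) k @[k --> \oo]).
  by rewrite -UF (cvg_lim _ cvF).
apply: lime_le; first by apply/cvg_ex; eexists; exact: cvF.
apply: nearW => k /=; apply: le_c; have := inv_le1 k; have := inv_gt0 k.
rewrite /h; set i := k.+1%:R^-1; nra.
Qed.

End MetricBalls.

Section NearestNeighborRisk.
Context {R : realType} {d : measure_display} {T : measurableType d}
  {dist : T -> T -> R}
  {dO : measure_display} {Omega : measurableType dO} {P : probability Omega R}
  {Xs XN : nat -> Omega -> T} {eta : T -> R} {x : T} {alpha K : R}.
Hypotheses (dist_metric : is_metric dist)
  (borel : @measurable _ T = <<s metric_open dist >>)
  (iid : iid_seq P Xs) (nn : nearest_neighbors dist x Xs XN)
  (meta : measurable_fun setT eta) (dev_le : forall y, `|eta y - eta x| <= K)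
  (pball_pos : forall r : R, 0 < r -> (0%:E < PXball P dist (Xs 0%N) x r)%E)
  (locE_pos : forall r : R, 0 < r -> (0%:E < locE P dist (Xs 0%N) eta x r)%E)
  (alpha01 : 0 < alpha < 1).

Local Notation X := (Xs 0%N).

Definition dev (y : T) : R := `|eta y - eta x|.
Definition locdev (r : R) : R := fine (locE P dist X eta x r).
Definition pball (r : R) : R := fine (PXball P dist X x r).
Local Notation M r := (Malpha P dist X eta x alpha r).
Local Notation rseq m := (alpha_seq P dist X eta x alpha m).

Lemma M_def (r : R) : M r = locdev r `^ alpha * pball r `^ (1 - alpha).
Proof. by []. Qed.

Lemma measurable_Xs (i : nat) : measurable_fun setT (Xs i).
Proof. by case: iid. Qed.

Lemma measurable_XN (m : nat) : measurable_fun setT (XN m).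
Proof. by case: nn. Qed.

Lemma measurable_Xs_cball (i : nat) (r : R) :
  measurable (Xs i @^-1` cball dist x r).
Proof. exact: preimage_measurable (measurable_Xs i) (measurable_cball dist_metric borel x r). Qed.

Lemma K_ge0 : 0 <= K.
Proof. exact: le_trans (normr_ge0 _) (dev_le x). Qed.

Lemma indic_dev_bounds (A : set T) (y : T) : 0 <= \1_A y * dev y <= K.
Proof.
have /andP[ind0 ind1] := indic01 R A y.
have dev0 : 0 <= dev y := normr_ge0 _.
rewrite mulr_ge0 //=; apply: le_trans (dev_le y).
by rewrite -[leRHS]mul1r ler_wpM2r.
Qed.

Lemma measurable_dev : measurable_fun setT dev.
Proof. exact/measurableT_comp/measurable_funB. Qed.

Lemma indic_dev_ge0 (A : set T) (y : T) : 0 <= \1_A y * dev y.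
Proof. by case/andP: (indic_dev_bounds A y). Qed.

Lemma measurable_indic_dev {A : set T} {Y : Omega -> T} :
  measurable A -> measurable_fun setT Y ->
  measurable_fun setT (fun w => \1_A (Y w) * dev (Y w)).
Proof.
move=> mA mY; apply: measurable_funM; first exact/measurableT_comp/mY/measurable_indic.
exact: measurableT_comp measurable_dev mY.
Qed.

Lemma measurable_cball_dev (i : nat) (r : R) :
  measurable_fun setT (fun w => \1_(cball dist x r) (Xs i w) * dev (Xs i w)).
Proof. exact: measurable_indic_dev (measurable_cball dist_metric borel x r) (measurable_Xs i). Qed.

Lemma locE_fineK (r : R) : locE P dist X eta x r = (locdev r)%:E.
Proof.
apply: bounded_integral_fineK => [|w]; last exact: indic_dev_bounds.
exact: measurable_cball_dev.
Qed.

Lemma PXball_fineK (r : R) : PXball P dist X x r = (pball r)%:E.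
Proof.
rewrite /pball /PXball fineK // ge0_fin_numE // (le_lt_trans (probability_le1 _ _)) ?ltry //.
exact: measurable_Xs_cball.
Qed.

Lemma locdev_ge0 (r : R) : 0 <= locdev r.
Proof. by rewrite -lee_fin -locE_fineK; apply: integral_ge0 => w _; rewrite lee_fin indic_dev_ge0. Qed.

Lemma pball_ge0 (r : R) : 0 <= pball r.
Proof. exact: fine_ge0. Qed.

Lemma pball_le1 (r : R) : pball r <= 1.
Proof.
rewrite -lee_fin -PXball_fineK; apply: probability_le1.
exact: measurable_Xs_cball.
Qed.

Lemma locdev_gt0 {r : R} : 0 < r -> 0 < locdev r.
Proof. by move=> r0; rewrite -lte_fin -locE_fineK; exact: locE_pos. Qed.

Lemma pball_gt0 {r : R} : 0 < r -> 0 < pball r.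
Proof. by move=> r0; rewrite -lte_fin -PXball_fineK; exact: pball_pos. Qed.

Lemma locdev_nonpos (r : R) : r <= 0 -> locdev r = 0.
Proof.
move=> r0; rewrite /locdev /locE integral0_eq // => w _.
rewrite indicE; case: (boolP (X w \in _)) => [|_]; last by rewrite mul0r.
rewrite in_setE /cball /= => le_r.
by rewrite (dist_le0 dist_metric (le_trans le_r r0)) /dev subrr normr0 mulr0.
Qed.

Lemma locdev_mono (r s : R) : r <= s -> locdev r <= locdev s.
Proof.
move=> rs; rewrite -lee_fin -!locE_fineK.
apply: ge0_le_integral => //; try exact/measurable_EFinP/measurable_cball_dev.
by move=> w _; rewrite lee_fin ler_wpM2r ?normr_ge0 ?indic_cball_le.
Qed.

Lemma pball_mono (r s : R) : r <= s -> pball r <= pball s.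
Proof.
move=> rs; rewrite -lee_fin -!PXball_fineK; apply: le_measure; rewrite ?inE.
- exact: measurable_Xs_cball.
- exact: measurable_Xs_cball.
by move=> w /= le_r; exact: le_trans le_r rs.
Qed.

Lemma M_mono {r s : R} : r <= s -> M r <= M s.
Proof.
move=> rs; rewrite !M_def; case/andP: alpha01 => a0 a1.
have le_loc : locdev r `^ alpha <= locdev s `^ alpha.
  by apply: ge0_ler_powR; rewrite ?nnegrE ?locdev_ge0 ?locdev_mono ?(ltW a0).
have le_p : pball r `^ (1 - alpha) <= pball s `^ (1 - alpha).
  by apply: ge0_ler_powR; rewrite ?nnegrE ?pball_ge0 ?pball_mono // subr_ge0 ltW.
by apply: ler_pM; rewrite ?powR_ge0.
Qed.

Lemma locdev_le_M {t de : R} : 0 < t -> 0 < de -> locdev t <= de * pball t ->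
  locdev t <= de `^ (1 - alpha) * M t.
Proof.
move=> t0 de0 le_de; case/andP: alpha01 => a0 a1.
rewrite {1}(powR_split alpha (locdev_gt0 t0)) M_def.
rewrite mulrA [de `^ _ * _]mulrC -mulrA ler_wpM2l ?powR_ge0 //.
rewrite -powRM ?(ltW de0) ?pball_ge0 //; apply: ge0_ler_powR => //.
- by rewrite subr_ge0 ltW.
- by rewrite nnegrE locdev_ge0.
- by rewrite nnegrE mulr_ge0 ?pball_ge0 // ltW.
Qed.

Lemma M_le_pball {t de : R} : 0 < t -> 0 < de -> locdev t <= de * pball t ->
  M t <= de `^ alpha * pball t.
Proof.
move=> t0 de0 le_de; case/andP: alpha01 => a0 a1.
rewrite M_def {2}(powR_split alpha (pball_gt0 t0)) mulrA ler_wpM2r ?powR_ge0 //.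
rewrite -powRM ?(ltW de0) ?pball_ge0 //; apply: ge0_ler_powR => //.
- exact: ltW.
- by rewrite nnegrE locdev_ge0.
- by rewrite nnegrE mulr_ge0 ?pball_ge0 // ltW.
Qed.

Definition below_set (m : nat) : set R := [set r | 0 < r /\ M r < m%:R^-1].

Lemma rseq_sup (m : nat) : rseq m = sup (below_set m).
Proof. by []. Qed.

(* With no admissible radius, sup set0 = 0. *)
Lemma rseq_empty (m : nat) : ~ (below_set m !=set0) -> rseq m = 0.
Proof.
move=> empty; rewrite rseq_sup; have -> : below_set m = set0; last exact: sup0.
by apply/seteqP; split => // u Su; exfalso; apply: empty; exists u.
Qed.

Lemma M_below_rseq (m : nat) (s : R) : 0 < s -> s < rseq m -> M s < m%:R^-1.
Proof.
move=> s0 lt_s.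
have [ne|empty] := pselect (below_set m !=set0); last first.
  by move: lt_s; rewrite rseq_empty // => /(lt_trans s0); rewrite ltxx.
move: lt_s; rewrite rseq_sup => /(sup_gt ne) [u [u0 Mu] su].
exact: le_lt_trans (M_mono (ltW su)) Mu.
Qed.

Section AlphaSequenceBounds.
Context {s : R} {m : nat}.
Hypotheses (s0 : 0 < s) (Ms : m%:R^-1 <= M s).

Lemma below_set_ub : ubound (below_set m) s.
Proof.
move=> u [u0 Mu]; rewrite leNgt; apply/negP => su.
by have := le_lt_trans Ms (le_lt_trans (M_mono (ltW su)) Mu); rewrite ltxx.
Qed.

Lemma rseq_ge0 : 0 <= rseq m.
Proof.
have [[u Su]|empty] := pselect (below_set m !=set0); last by rewrite rseq_empty.
rewrite rseq_sup; apply: le_trans (ltW Su.1) _; apply: sup_upper_bound => //.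
by split; [exists u | exists s; exact: below_set_ub].
Qed.

Lemma rseq_le : rseq m <= s.
Proof.
have [ne|empty] := pselect (below_set m !=set0); last by rewrite rseq_empty // ltW.
by rewrite rseq_sup; apply: ge_sup => //; exact: below_set_ub.
Qed.

Lemma M_beyond_rseq {t : R} : rseq m < t -> m%:R^-1 <= M t.
Proof.
move=> lt_t; rewrite leNgt; apply/negP => Mt.
have t0 : 0 < t := le_lt_trans rseq_ge0 lt_t.
have : t <= rseq m.
  rewrite rseq_sup; apply: sup_upper_bound => //.
  by split; [exists t | exists s; exact: below_set_ub].
by rewrite leNgt lt_t.
Qed.

End AlphaSequenceBounds.

(* Each X_i has the law of X, so truncated expectations of dev(X_i) over
   closed balls are given by locdev. *)
Lemma integral_Xs_cball (i : nat) (s : R) :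
  (\int[P]_w (\1_(cball dist x s) (Xs i w) * dev (Xs i w))%:E)%E = (locdev s)%:E.
Proof.
rewrite -locE_fineK.
apply: (integral_same_law P (fun y => \1_(cball dist x s) y * dev y)
  (measurable_Xs i) (measurable_Xs 0)).
- by move=> A mA; case: iid => _ [same_law _]; exact: same_law.
- exact/measurable_funM/measurable_dev/measurable_indic/measurable_cball.
- by move=> y; exact: indic_dev_ge0.
Qed.

(* By independence, the nearest neighbour is farther than t from x only if
   all of X_1, ..., X_m are, which has probability (1 - P_X(cl B_t))^m. *)
Lemma nn_far_prob {m : nat} (t : R) : (1 <= m)%N ->
  (P [set w | (t < dist x (XN m w))%R] <= ((1 - pball t) ^+ m)%:E)%E.
Proof.
move=> m1.
pose B i := if i == 0%N then setT else ~` cball dist x t.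
have mB i : measurable (B i).
  by rewrite /B; case: (i == 0%N) => //; exact/measurableC/measurable_cball.
have far_all : [set w | (t < dist x (XN m w))%R] `<=` \bigcap_(i in `I_m.+1) (Xs i @^-1` B i).
  move=> w /= far_w i /= lt_i; rewrite /B; case: eqP => // /eqP i0.
  have [_ nearest] := (proj2 nn) m w m1.
  have /nearest le_i : (1 <= i <= m)%N by rewrite lt0n i0 -ltnS.
  by rewrite /cball /= => le_t; lra.
apply: le_trans (le_measure _ _ _ far_all) _; rewrite ?inE.
- exact: preimage_measurable (measurable_XN m) (measurable_dist_gt dist_metric borel x t).
- by apply: bigcap_measurableType => i _; exact: preimage_measurable (measurable_Xs i) (mB i).
case: iid => _ [same_law indep].
rewrite [X in (X <= _)%E](indep m.+1 B mB) big_ord_recl /B /= preimage_setT probability_setT mul1e.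
rewrite (eq_bigr (fun=> (1 - pball t)%:E)) ?prodEFin ?prodr_const ?card_ord // => i _.
rewrite same_law; last exact/measurableC/measurable_cball.
rewrite -preimage_setC probability_setC; last exact: measurable_Xs_cball.
by have := PXball_fineK t; rewrite /PXball => ->.
Qed.

(* Pointwise decomposition of the error at the nearest neighbour, for a
   radius r: inside the open ball it is the error at one of X_1, ..., X_m;
   on the sphere it is the sphere term; outside the closed ball it is <= K. *)
Lemma dev_XN_split (m : nat) (r : R) (w : Omega) : (1 <= m)%N ->
  dev (XN m w) <= \sum_(i < m) \1_(oball dist x r) (Xs i.+1 w) * dev (Xs i.+1 w)
    + \1_(sphere dist x r) (XN m w) * dev (XN m w)
    + K * \1_[set w | (r < dist x (XN m w))%R] w.
Proof.
move=> m1.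
have [[i /andP[i1 im] XNi] _] := (proj2 nn) m w m1.
have near0 : 0 <= \sum_(i < m) \1_(oball dist x r) (Xs i.+1 w) * dev (Xs i.+1 w).
  by apply: sumr_ge0 => j _; exact: indic_dev_ge0.
have sphere0 := indic_dev_ge0 (sphere dist x r) (XN m w).
have far0 : 0 <= K * \1_[set w | (r < dist x (XN m w))%R] w.
  by rewrite mulr_ge0 ?K_ge0 //; case/andP: (indic01 R [set w | (r < dist x (XN m w))%R] w).
case: (ltgtP (dist x (XN m w)) r) => [inside|outside|on_sphere].
- have i_lt : (i.-1 < m)%N by rewrite prednK // -ltnS ?ltnS // (leq_trans im).
  rewrite (bigD1 (Ordinal i_lt)) //= prednK //.
  have Xi_in : oball dist x r (Xs i w) by rewrite /oball /= -XNi.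
  rewrite indicE (mem_set Xi_in) mul1r -XNi.
  have rest0 : 0 <= \sum_(j < m | j != Ordinal i_lt)
      \1_(oball dist x r) (Xs j.+1 w) * dev (Xs j.+1 w).
    by apply: sumr_ge0 => j _; exact: indic_dev_ge0.
  lra.
- have far_w : [set w | (r < dist x (XN m w))%R] w by [].
  rewrite [X in K * X]indicE (mem_set far_w) mulr1.
  by have := dev_le (XN m w); rewrite -/(dev _); lra.
- have on_w : sphere dist x r (XN m w) by [].
  by rewrite [X in X * dev _]indicE (mem_set on_w) mul1r; lra.
Qed.

Lemma risk_le_split {m : nat} (r : R) : (1 <= m)%N ->
  (\int[P]_w (dev (XN m w))%:E <=
   \sum_(i < m) \int[P]_w (\1_(oball dist x r) (Xs i.+1 w) * dev (Xs i.+1 w))%:E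
   + \int[P]_w (\1_(sphere dist x r) (XN m w) * dev (XN m w))%:E
   + K%:E * P [set w | (r < dist x (XN m w))%R])%E.
Proof.
move=> m1; set far := [set w | (r < dist x (XN m w))%R].
have mfar : measurable far.
  exact: preimage_measurable (measurable_XN m) (measurable_dist_gt dist_metric borel x r).
pose near i w := (\1_(oball dist x r) (Xs i.+1 w) * dev (Xs i.+1 w))%:E.
pose on w := (\1_(sphere dist x r) (XN m w) * dev (XN m w))%:E.
have mnear i : measurable_fun setT (near i).
  exact/measurable_EFinP/measurable_indic_dev/measurable_Xs/measurable_oball.
have mon : measurable_fun setT on.
  exact/measurable_EFinP/measurable_indic_dev/measurable_XN/measurable_sphere.
have mfarK : measurable_fun setT (fun w => (K * \1_far w)%:E).
  exact/measurable_EFinP/measurable_funM/measurable_indic.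
have near0 i w : (0 <= near i w)%E by rewrite lee_fin indic_dev_ge0.
have on0 w : (0 <= on w)%E by rewrite lee_fin indic_dev_ge0.
have farK0 w : (0 <= (K * \1_far w)%:E)%E.
  by rewrite lee_fin mulr_ge0 ?K_ge0 //; case/andP: (indic01 R far w).
have sum0 w : (0 <= \sum_(i < m) near i w)%E by apply: sume_ge0.
have mrisk : measurable_fun setT (fun w => (dev (XN m w))%:E).
  exact/measurable_EFinP/(measurableT_comp measurable_dev (measurable_XN m)).
have msum : measurable_fun setT (fun w => \sum_(i < m) near i w)%E.
  exact: emeasurable_sum.
apply: (@le_trans _ _ (\int[P]_w (\sum_(i < m) near i w + on w + (K * \1_far w)%:E))%E).
  apply: ge0_le_integral => //.
  - by move=> w _; rewrite lee_fin normr_ge0.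
  - by do 2 apply: emeasurable_funD => //.
  by move=> w _; rewrite /near /on sumEFin -!EFinD lee_fin dev_XN_split.
rewrite ge0_integralD //; last 2 first.
- by move=> w _; rewrite adde_ge0.
- exact: emeasurable_funD.
have far_int : (\int[P]_w (K * \1_far w)%:E = K%:E * P far)%E.
  under eq_integral do rewrite EFinM.
  rewrite ge0_integralZl ?lee_fin ?K_ge0 //; first by rewrite integral_indic // setIT.
  exact/measurable_EFinP/measurable_indic.
by rewrite ge0_integralD // ge0_integral_sum // far_int.
Qed.

Section RiskBound.
Context {de rho : R} {m : nat}.
Hypotheses (de0 : 0 < de) (rho0 : 0 < rho)
  (regime : forall t, 0 < t < rho -> locdev t <= de * pball t)
  (m1 : (1 <= m)%N) (M_rho : m%:R^-1 <= M (rho / 2)).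

Lemma rseq_lt_rho : rseq m < rho.
Proof.
have rho2 : 0 < rho / 2 by rewrite divr_gt0.
by apply: le_lt_trans (rseq_le rho2 M_rho) _; lra.
Qed.

(* Far term: beyond r_m we have 1 <= m P_X(cl B_t) de^alpha, so all m
   sample points avoid cl B_t with probability at most de^alpha. *)
Lemma far_prob_t (t : R) : rseq m < t < rho ->
  (P [set w | (t < dist x (XN m w))%R] <= (de `^ alpha)%:E)%E.
Proof.
move=> /andP[rt trho]; have t0 : 0 < t := le_lt_trans (rseq_ge0 M_rho) rt.
apply: le_trans (nn_far_prob t m1) _; rewrite lee_fin.
have M_t := M_le_pball t0 de0 (regime t (introT andP (conj t0 trho))).
have m0 : 0 < m%:R :> R by rewrite ltr0n.
have many : 1 <= m%:R * pball t * de `^ alpha.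
  have mV : m%:R * m%:R^-1 = 1 :> R by rewrite mulfV // gt_eqF.
  move: (le_trans (M_beyond_rseq M_rho rt) M_t) mV m0.
  by set iM := m%:R^-1; set c := de `^ alpha; set N := m%:R; nra.
have fail := expr_fail_le m (introT andP (conj (pball_ge0 t) (pball_le1 t))).
have pow0 : 0 <= (1 - pball t) ^+ m by apply: exprn_ge0; have := pball_le1 t; lra.
have c0 : 0 <= de `^ alpha by exact: powR_ge0.
move: many fail pow0 c0; set a := (1 - pball t) ^+ m; set b := m%:R * pball t.
by set c := de `^ alpha; nra.
Qed.

(* Letting t decrease to r_m gives the bound on the far event. *)
Lemma far_prob : (P [set w | (rseq m < dist x (XN m w))%R] <= (de `^ alpha)%:E)%E.
Proof.
apply: (prob_far_le dist_metric borel P x (measurable_XN m) rseq_lt_rho).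
by move=> t /andP[rt trho]; apply: far_prob_t; rewrite rt.
Qed.

(* Near terms: below r_m we have M_alpha < 1/m, hence locdev <= de^(1-alpha)/m. *)
Lemma locdev_below_rseq (s : R) : s < rseq m -> locdev s <= de `^ (1 - alpha) / m%:R.
Proof.
move=> lt_s; have [s0|s0] := leP s 0.
  by rewrite locdev_nonpos // divr_ge0 ?powR_ge0.
have s_rho : s < rho := lt_trans lt_s rseq_lt_rho.
apply: le_trans (locdev_le_M s0 de0 (regime s (introT andP (conj s0 s_rho)))) _.
by rewrite ler_wpM2l ?powR_ge0 // ltW // M_below_rseq.
Qed.

(* Letting the closed balls increase to B_{r_m}: each of the m open-ball
   terms is at most de^(1-alpha)/m. *)
Lemma near_term (i : nat) :
  (\int[P]_w (\1_(oball dist x (rseq m)) (Xs i w) * dev (Xs i w))%:E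
     <= (de `^ (1 - alpha) / m%:R)%:E)%E.
Proof.
apply: (integral_oball_le dist_metric borel P x (measurable_Xs i)).
- exact: measurable_dev.
- by move=> y; exact: normr_ge0.
by move=> s lt_s; rewrite integral_Xs_cball lee_fin locdev_below_rseq.
Qed.

Lemma risk_bound :
  (\int[P]_w (dev (XN m w))%:E <= (de `^ (1 - alpha) + K * de `^ alpha)%:E
     + \int[P]_w (\1_(sphere dist x (rseq m)) (XN m w) * dev (XN m w))%:E)%E.
Proof.
apply: le_trans (risk_le_split (rseq m) m1) _.
have near_sum : (\sum_(i < m) \int[P]_w (\1_(oball dist x (rseq m)) (Xs i.+1 w)
    * dev (Xs i.+1 w))%:E <= (de `^ (1 - alpha))%:E)%E.
  apply: (@le_trans _ _ (\sum_(i < m) (de `^ (1 - alpha) / m%:R)%:E)%E).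
    by apply: lee_sum => i _; exact: near_term.
  rewrite sumEFin sumr_const card_ord lee_fin -mulrnAr -(mulr_natr (m%:R^-1)) mulVf ?mulr1 //.
  by rewrite pnatr_eq0 -lt0n.
have far_term : (K%:E * P [set w | (rseq m < dist x (XN m w))%R] <= (K * de `^ alpha)%:E)%E.
  by rewrite EFinM lee_wpmul2l ?lee_fin ?K_ge0 ?far_prob.
by rewrite EFinD addeAC leeD2r // leeD.
Qed.

End RiskBound.

Lemma sphere_term_le_risk (m : nat) (r : R) :
  (\int[P]_w (\1_(sphere dist x r) (XN m w) * `|eta (XN m w) - eta x|)%:E
    <= \int[P]_w (`|eta (XN m w) - eta x|)%:E)%E.
Proof.
have msphere := measurable_indic_dev (measurable_sphere dist_metric borel x r) (measurable_XN m).
have mdev : measurable_fun setT (fun w => `|eta (XN m w) - eta x|).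
  exact: measurableT_comp measurable_dev (measurable_XN m).
apply: ge0_le_integral => //; try exact/measurable_EFinP.
by move=> w _; rewrite lee_fin -[leRHS]mul1r ler_wpM2r ?normr_ge0.
Qed.

Lemma lebesgue_regime {de : R} : lebesgue_point P dist X eta x -> 0 < de ->
  exists2 rho, 0 < rho & forall t, 0 < t < rho -> locdev t <= de * pball t.
Proof.
move=> /cvgr0Pnorm_le /(_ de) leb de0; have [rho /= rho0 small] := leb de0.
exists rho => // t /andP[t0 t_rho].
have := small t; rewrite /= sub0r normrN gtr0_norm // => /(_ t_rho t0).
rewrite ger0_norm ?divr_ge0 ?locdev_ge0 ?pball_ge0 //.
by rewrite ler_pdivrMr ?pball_gt0 // mulrC.
Qed.

(* Since M_alpha(rho/2) > 0, eventually 1/m <= M_alpha(rho/2). *)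
Lemma eventually_M_ge {rho : R} : 0 < rho ->
  \forall m \near \oo, (1 <= m)%N /\ m%:R^-1 <= M (rho / 2).
Proof.
move=> rho0; have rho2 : 0 < rho / 2 by rewrite divr_gt0.
have M0 : 0 < M (rho / 2).
  by rewrite M_def mulr_gt0 // powR_gt0 ?locdev_gt0 ?pball_gt0.
apply: near_inftyS; apply: filterS (near_infty_natSinv_lt (PosNum M0)) => n lt_n.
by split => //; exact: ltW.
Qed.

Lemma risk_le_sphere_term {eps : R} : lebesgue_point P dist X eta x -> 0 < eps ->
  \forall m \near \oo, (\int[P]_w (`|eta (XN m w) - eta x|)%:E <= eps%:E +
    \int[P]_w (\1_(sphere dist x (rseq m)) (XN m w) * `|eta (XN m w) - eta x|)%:E)%E.
Proof.
move=> leb eps0.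
have [de de0 small_err] := exists_small_scale alpha01 K_ge0 eps0.
have [rho rho0 regime] := lebesgue_regime leb de0.
apply: filterS (eventually_M_ge rho0) => m [m1 M_rho].
apply: le_trans (risk_bound de0 rho0 regime m1 M_rho) _.
by rewrite leeD2r // lee_fin.
Qed.

End NearestNeighborRisk.

(* Both sequences are nonnegative, so each converges to 0 iff it is eventually
   below every eps > 0: (i) => (ii) by sphere_term_le_risk and (ii) => (i) by
   risk_le_sphere_term with eps/2. *)
Theorem mainTheorem6 (R : realType) (d : measure_display) (T : measurableType d)
  (dist : T -> T -> R)
  (dO : measure_display) (Omega : measurableType dO) (P : probability Omega R)
  (Xs : nat -> Omega -> T) (XN : nat -> Omega -> T)
  (eta : T -> R) (x : T) (alpha : R) :
  is_metric dist ->
  @measurable _ T = <<s metric_open dist >> ->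
  iid_seq P Xs ->
  nearest_neighbors dist x Xs XN ->
  measurable_fun setT eta ->
  (exists M : R, forall y, `|eta y| <= M) ->
  (forall r : R, 0 < r -> (0%:E < PXball P dist (Xs 0%N) x r)%E) ->
  P (Xs 0%N @^-1` [set x]) = 0%E ->
  (forall r : R, 0 < r -> (0%:E < locE P dist (Xs 0%N) eta x r)%E) ->
  0 < alpha < 1 ->
  lebesgue_point P dist (Xs 0%N) eta x ->
  ((fun m => (\int[P]_w (`|eta (XN m w) - eta x|)%:E)%E) @ \oo --> 0%E)
  <->
  ((fun m => (\int[P]_w
       ((\1_(sphere dist x (alpha_seq P dist (Xs 0%N) eta x alpha m)) (XN m w))
        * `|eta (XN m w) - eta x|)%:E)%E) @ \oo --> 0%E).
Proof.
move=> metric borel iid nn meta [M bounded] pball_pos _ locE_pos alpha01 leb.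
have dev_le y : `|eta y - eta x| <= M + M.
  by apply: le_trans (ler_normB _ _) _; exact: lerD.
rewrite !nonneg_cvge0P; first split=> small e e0.
- apply: filterS (small e e0) => m; apply: le_trans.
  exact: sphere_term_le_risk metric borel nn meta m _.
- have e2 : 0 < e / 2 by rewrite divr_gt0.
  have := risk_le_sphere_term metric borel iid nn meta dev_le pball_pos locE_pos alpha01 leb e2.
  apply: filterS2 (small _ e2) => m small_sphere; move/le_trans; apply.
  have -> : e%:E = ((e / 2)%:E + (e / 2)%:E)%E by rewrite -EFinD -splitr.
  by rewrite leeD2l.
all: by move=> m; apply: integral_ge0 => w _; rewrite lee_fin ?mulr_ge0.
Qed.
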